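(* Let $a>0$. Then $$\int_0^1 f_a(x)\,dx=\frac{1}{1+a}\Bigl[1-\frac{a\pi}{a+1}\cot\frac{a\pi}{a+1}\Bigr]$$ and $$\int_0^{a/(a+1)} f_a(x)\,dx=\frac{1}{2(1+a)^2}\Bigl[1+a+a^2-a\pi\cot\frac{a\pi}{a+1}\Bigr].$$
   Context: For $a>0$ let $\phi_a(x)=x^a-x^{a+1}$ on $[0,1]$, strictly increasing on $[0,x_0]$ and strictly decreasing on $[x_0,1]$ with $x_0=a/(a+1)$. Let $l_a,r_a$ be the restrictions of $\phi_a$ to $[0,x_0]$ and $[x_0,1]$. Define $f_a(x)=r_a^{-1}(\phi_a(x))$ for $0\le x\le x_0$ and $f_a(x)=l_a^{-1}(\phi_a(x))$ for $x_0\le x\le1$. *)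

From Stdlib Require Import Reals ClassicalEpsilon.
From Coquelicot Require Import Coquelicot.
Open Scope R_scope.

Definition rpow (x a : R) : R := if Rle_dec x 0 then 0 else Rpower x a.

Definition phi_a (a x : R) : R := rpow x a - rpow x (a + 1).

Definition x0 (a : R) : R := a / (a + 1).

Definition r_inv (a t : R) : R :=
  epsilon (inhabits 0) (fun y => x0 a <= y <= 1 /\ phi_a a y = t).

Definition l_inv (a t : R) : R :=
  epsilon (inhabits 0) (fun y => 0 <= y <= x0 a /\ phi_a a y = t).

(* f_a(x) = r_a^{-1}(phi_a x) on [0,x0], l_a^{-1}(phi_a x) on [x0,1]
   (both give x0 at x = x0). *)
Definition f_a (a x : R) : R :=
  if Rle_dec x (x0 a) then r_inv a (phi_a a x) else l_inv a (phi_a a x).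

Definition cot (x : R) : R := cos x / sin x.

From Stdlib Require Import Reals Lra Lia Psatz ClassicalEpsilon.
From Coquelicot Require Import Coquelicot.
Open Scope R_scope.

(* Write p = a / (a + 1) and q = 1 - p. For 0 < t < 1 the points
     x(t) = (t^q - t) / (1 - t) in ]0, p]  and  y(t) = (1 - t^p) / (1 - t) in [p, 1[
   satisfy x = t^q y and phi_a x = phi_a y, so f_a exchanges x(t) and y(t). Substituting
   x = x(t) in the integral of f_a over [0, p], and y = y(t) in the one over [p, 1], leaves
   elementary terms and -+ (p q / 2) K with K = int_0^1 (t^p - t^q) / (1 - t) dt.
   Expanding 1 / (1 - t) geometrically, K = sum_n (1 / (n + 1 + p) - 1 / (n + 2 - p)).
   This series and pi cot(pi x) + 1 / (1 - x) - 1 / x are continuous on [0, 1], agree at the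
   endpoints and satisfy the same duplication formula in x, so by Herglotz's trick they
   coincide. *)

(* [MVT_gen] only locates the mean-value point in the closed interval; applying it on the
   middle third of [x, y] keeps that point interior. *)
Lemma strictly_increasing_of_derive f df l r :
  (forall x, l < x < r -> is_derive f x (df x)) ->
  (forall x, l <= x <= r -> continuity_pt f x) ->
  (forall x, l <= x <= r -> 0 <= df x) ->
  (forall x, l < x < r -> 0 < df x) ->
  forall x y, l <= x -> x < y -> y <= r -> f x < f y.
Proof.
  intros Hd Hc Hnn Hpos.
  assert (Hmvt : forall u v, l <= u -> u < v -> v <= r ->
            exists c, u <= c <= v /\ f v - f u = df c * (v - u)).
  { intros u v Hu Huv Hv.
    destruct (MVT_gen f u v df) as [c Hcuv]; rewrite ?Rmin_left, ?Rmax_right in * by lra.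
    - intros z Hz; apply Hd; lra.
    - intros z Hz; apply Hc; lra.
    - exists c; exact Hcuv. }
  assert (Hle : forall u v, l <= u -> u < v -> v <= r -> f u <= f v).
  { intros u v Hu Huv Hv; destruct (Hmvt u v Hu Huv Hv) as [c [Hcuv Heq]].
    assert (0 <= df c) by (apply Hnn; lra); nra. }
  intros x y Hx Hxy Hy.
  set (m1 := x + (y - x) / 3); set (m2 := x + 2 * (y - x) / 3).
  destruct (Hmvt m1 m2) as [c [Hc12 Heq]]; try (unfold m1, m2; lra).
  assert (0 < df c) by (apply Hpos; unfold m1, m2 in *; lra).
  assert (f x <= f m1) by (apply Hle; unfold m1; lra).
  assert (f m2 <= f y) by (apply Hle; unfold m2; lra).
  assert (0 < m2 - m1) by (unfold m1, m2; lra).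
  nra.
Qed.

Lemma strictly_decreasing_of_derive f df l r :
  (forall x, l < x < r -> is_derive f x (df x)) ->
  (forall x, l <= x <= r -> continuity_pt f x) ->
  (forall x, l <= x <= r -> df x <= 0) ->
  (forall x, l < x < r -> df x < 0) ->
  forall x y, l <= x -> x < y -> y <= r -> f y < f x.
Proof.
  intros Hd Hc Hnp Hneg x y Hx Hxy Hy.
  cut (- f x < - f y); [lra|].
  apply (strictly_increasing_of_derive (fun t => - f t) (fun t => - df t) l r); auto.
  - intros z Hz; apply (is_derive_opp f), Hd, Hz.
  - intros z Hz; apply continuity_pt_opp, Hc, Hz.
  - intros z Hz; specialize (Hnp z Hz); lra.
  - intros z Hz; specialize (Hneg z Hz); lra.
Qed.

Definition clamp (l r x : R) : R := Rmax l (Rmin r x).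

Lemma clamp_in l r x : l <= r -> l <= clamp l r x <= r.
Proof. intros H; unfold clamp, Rmax, Rmin; repeat destruct Rle_dec; lra. Qed.

Lemma clamp_id l r x : l <= x <= r -> clamp l r x = x.
Proof. intros H; unfold clamp, Rmax, Rmin; repeat destruct Rle_dec; lra. Qed.

Lemma clamp_lipschitz l r x y : l <= r -> Rabs (clamp l r x - clamp l r y) <= Rabs (x - y).
Proof.
  intros H; unfold clamp, Rmax, Rmin; repeat destruct Rle_dec;
    unfold Rabs; repeat destruct Rcase_abs; lra.
Qed.

Section Decreasing_onto.

Variables (g : R -> R) (l r : R).
Hypothesis Hdec : forall x y, l <= x -> x < y -> y <= r -> g y < g x.
Hypothesis Honto : forall w, g r <= w <= g l -> exists x, l <= x <= r /\ g x = w.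

Let Hmono x y : l <= x -> x <= y -> y <= r -> g y <= g x.
Proof. intros; destruct (Req_dec x y) as [->|]; [lra|left; apply Hdec; lra]. Qed.

Lemma decreasing_onto_left c eps : l <= c <= r -> 0 < eps ->
  exists d, 0 < d /\ forall y, l <= y -> y < c -> c - y < d -> g y < g c + eps.
Proof.
  intros Hc Heps; destruct (Rlt_le_dec (g c) (g l)) as [Hlt|Hge].
  - assert (Hr : g r <= g c) by (apply Hmono; lra).
    destruct (Honto (Rmin (g c + eps / 2) (g l))) as [x1 [Hx1 Hgx1]];
      [unfold Rmin; destruct Rle_dec; lra|].
    assert (Hx1c : x1 < c).
    { destruct (Rlt_le_dec x1 c) as [|Hle]; [assumption|].
      assert (g x1 <= g c) by (apply Hmono; lra).
      unfold Rmin in Hgx1; destruct Rle_dec; lra. }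
    exists (c - x1); split; [lra|]; intros y Hy Hyc Hd.
    assert (g y < g x1) by (apply Hdec; lra).
    unfold Rmin in Hgx1; destruct Rle_dec; lra.
  - exists 1; split; [lra|]; intros y Hy Hyc _.
    assert (g c < g y) by (apply Hdec; lra).
    assert (g y <= g l) by (apply Hmono; lra); lra.
Qed.

Lemma decreasing_onto_right c eps : l <= c <= r -> 0 < eps ->
  exists d, 0 < d /\ forall y, c < y -> y <= r -> y - c < d -> g c - eps < g y.
Proof.
  intros Hc Heps; destruct (Rlt_le_dec (g r) (g c)) as [Hlt|Hge].
  - assert (Hl : g c <= g l) by (apply Hmono; lra).
    destruct (Honto (Rmax (g c - eps / 2) (g r))) as [x2 [Hx2 Hgx2]];
      [unfold Rmax; destruct Rle_dec; lra|].
    assert (Hx2c : c < x2).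
    { destruct (Rlt_le_dec c x2) as [|Hle]; [assumption|].
      assert (g c <= g x2) by (apply Hmono; lra).
      unfold Rmax in Hgx2; destruct Rle_dec; lra. }
    exists (x2 - c); split; [lra|]; intros y Hcy Hy Hd.
    assert (g x2 < g y) by (apply Hdec; lra).
    unfold Rmax in Hgx2; destruct Rle_dec; lra.
  - exists 1; split; [lra|]; intros y Hcy Hy _.
    assert (g y < g c) by (apply Hdec; lra).
    assert (g r <= g y) by (apply Hmono; lra); lra.
Qed.

Lemma continuous_clamp_of_decreasing :
  l <= r -> forall c, continuity_pt (fun x => g (clamp l r x)) c.
Proof.
  intros Hlr c eps Heps; simpl; unfold R_dist.
  set (cc := clamp l r c); assert (Hcc : l <= cc <= r) by (apply clamp_in, Hlr).
  destruct (decreasing_onto_left cc eps Hcc Heps) as [d1 [Hd1 Hleft]].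
  destruct (decreasing_onto_right cc eps Hcc Heps) as [d2 [Hd2 Hright]].
  exists (Rmin d1 d2); split; [apply Rmin_pos; assumption|]; intros x [_ Hx].
  assert (Hy : l <= clamp l r x <= r) by (apply clamp_in, Hlr).
  assert (Hdist := clamp_lipschitz l r x c Hlr); fold cc in Hdist.
  pose proof (Rmin_l d1 d2); pose proof (Rmin_r d1 d2); apply Rabs_le_between' in Hdist.
  destruct (Rtotal_order (clamp l r x) cc) as [Hlt|[-> |Hgt]];
    [|rewrite Rminus_diag, Rabs_R0; lra|].
  - assert (g cc < g (clamp l r x)) by (apply Hdec; lra).
    assert (g (clamp l r x) < g cc + eps) by (apply Hleft; lra).
    apply Rabs_lt_between; lra.
  - assert (g (clamp l r x) < g cc) by (apply Hdec; lra).
    assert (g cc - eps < g (clamp l r x)) by (apply Hright; lra).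
    apply Rabs_lt_between; lra.
Qed.

End Decreasing_onto.

Lemma is_lim_scal_fin (f : R -> R) (x : Rbar) (c l : R) :
  is_lim f x l -> is_lim (fun y => c * f y) x (c * l).
Proof. intros H; exact (is_lim_scal_l f c x l H). Qed.

Lemma is_lim_mult_fin (f g : R -> R) (x : Rbar) (lf lg : R) :
  is_lim f x lf -> is_lim g x lg -> is_lim (fun y => f y * g y) x (lf * lg).
Proof. intros Hf Hg; exact (is_lim_mult f g x lf lg Hf Hg I). Qed.

Lemma is_lim_div_one_minus (g : R -> R) (x l m : R) :
  x <> 1 -> is_lim g x l -> m = l / (1 - x) -> is_lim (fun t => g t / (1 - t)) x m.
Proof.
  intros Hx Hg ->.
  apply (is_lim_div g (fun t => 1 - t) x l (1 - x)); [exact Hg| |intro E; injection E; lra|exact I].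
  apply (is_lim_minus' (fun _ => 1)); [apply is_lim_const|apply is_lim_id].
Qed.

Lemma is_lim_div_one_minus_at_1 (g : R -> R) (d m : R) :
  g 1 = 0 -> is_derive g 1 d -> m = - d -> is_lim (fun t => g t / (1 - t)) 1 m.
Proof.
  intros Hg1 Hd ->; apply is_lim_spec; apply is_derive_Reals in Hd.
  intros eps; destruct (Hd eps (cond_pos eps)) as [del Hdel].
  exists del; intros t' Ht Hne; set (t := t' : R) in *.
  assert (Hh : t - 1 <> 0) by lra.
  specialize (Hdel (t - 1) Hh Ht).
  replace (1 + (t - 1)) with t in Hdel by ring; rewrite Hg1 in Hdel.
  replace (g t / (1 - t) - - d) with (- ((g t - 0) / (t - 1) - d)) by (field; lra).
  rewrite Rabs_Ropp; exact Hdel.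
Qed.

Lemma continuity_pt_of_is_lim f (x : R) : is_lim f x (f x) -> continuity_pt f x.
Proof.
  intros Hlim eps Heps; apply is_lim_spec in Hlim.
  destruct (Hlim (mkposreal _ Heps)) as [d Hd].
  exists d; split; [apply cond_pos|]; intros y [_ Hy]; simpl in *; unfold R_dist in *.
  destruct (Req_dec y x) as [->|Hne]; [rewrite Rminus_diag, Rabs_R0; lra|apply Hd; assumption].
Qed.

Lemma is_lim_near f (x l eps : R) : is_lim f x l -> 0 < eps ->
  locally' x (fun y => Rabs (f y - l) < eps).
Proof.
  intros Hlim Heps; apply is_lim_spec in Hlim.
  destruct (Hlim (mkposreal _ Heps)) as [d Hd].
  exists d; intros y Hy Hne; apply Hd; assumption.
Qed.

Lemma exists_near_0_and_1 (P Q : R -> Prop) eps : 0 < eps -> locally' 0 P -> locally' 1 Q ->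
  exists e T, 0 < e < eps /\ e < T < 1 /\ 1 - T < eps /\ P e /\ Q T.
Proof.
  intros Heps [d0 HP] [d1 HQ].
  assert (Hsmall : forall d : posreal, exists h, 0 < h <= d /\ h <= eps /\ h <= 1 / 2).
  { intros d; exists (Rmin (Rmin d eps) (1 / 2)).
    pose proof (Rmin_l (Rmin d eps) (1 / 2)); pose proof (Rmin_r (Rmin d eps) (1 / 2)).
    pose proof (Rmin_l d eps); pose proof (Rmin_r d eps).
    assert (0 < Rmin (Rmin d eps) (1 / 2)) by (repeat apply Rmin_pos; try apply cond_pos; lra).
    lra. }
  destruct (Hsmall d0) as [h0 B0]; destruct (Hsmall d1) as [h1 B1].
  exists (h0 / 2), (1 - h1 / 2); repeat split; try lra.
  - apply HP; [apply Rabs_lt_between'|]; lra.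
  - apply HQ; [apply Rabs_lt_between'|]; lra.
Qed.

Lemma eq_of_abs_le_eps A B C : (forall eps, 0 < eps -> Rabs (A - B) <= C * eps) -> A = B.
Proof.
  intros Hle; destruct (Req_dec A B) as [|Hne]; [assumption|exfalso].
  assert (Hd : 0 < Rabs (A - B)) by (apply Rabs_pos_lt; lra).
  assert (HC : 0 < C) by (specialize (Hle 1 Rlt_0_1); lra).
  specialize (Hle (Rabs (A - B) / (2 * C)) ltac:(apply Rdiv_lt_0_compat; lra)).
  replace (C * (Rabs (A - B) / (2 * C))) with (Rabs (A - B) / 2) in Hle by (field; lra); lra.
Qed.

Lemma exists_div_INR_lt C eps : 0 < eps -> exists N : nat, C / (INR N + 1) < eps.
Proof.
  intros Heps; destruct (INR_archimed eps (Rabs C) Heps) as [N HN].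
  exists N; pose proof (pos_INR N); pose proof (RRle_abs C).
  apply Rlt_div_l; [lra|nra].
Qed.

Lemma eq_of_abs_le_div_INR A B C : (forall N, Rabs (A - B) <= C / (INR N + 1)) -> A = B.
Proof.
  intros H; destruct (Req_dec A B) as [|Hne]; [assumption|exfalso].
  assert (Hd : 0 < Rabs (A - B)) by (apply Rabs_pos_lt; lra).
  destruct (exists_div_INR_lt C _ Hd) as [N HN]; specialize (H N); lra.
Qed.

Lemma Lim_seq_approx (u : nat -> R) C :
  (forall N M, (N <= M)%nat -> Rabs (u M - u N) <= C / (INR N + 1)) ->
  forall N, Rabs (real (Lim_seq u) - u N) <= C / (INR N + 1).
Proof.
  intros Hcauchy N.
  assert (Hex : ex_finite_lim_seq u).
  { apply ex_lim_seq_cauchy_corr; intros eps.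
    destruct (exists_div_INR_lt (2 * C) eps (cond_pos eps)) as [N0 HN0].
    exists N0; intros n m Hn Hm.
    pose proof (Hcauchy N0 n Hn) as Hn0; pose proof (Hcauchy N0 m Hm) as Hm0.
    replace (2 * C / (INR N0 + 1)) with (C / (INR N0 + 1) + C / (INR N0 + 1)) in HN0
      by (pose proof (pos_INR N0); field; lra).
    apply Rabs_le_between in Hn0; apply Rabs_le_between in Hm0; apply Rabs_lt_between; lra. }
  destruct Hex as [l Hl]; rewrite (is_lim_seq_unique _ _ Hl); simpl.
  assert (Hle : Rbar_le (Rabs (l - u N)) (C / (INR N + 1))).
  { apply (is_lim_seq_le_loc (fun M => Rabs (u M - u N)) (fun _ => C / (INR N + 1))).
    - exists N; intros M HM; apply Hcauchy; lia.
    - apply (is_lim_seq_abs _ (l - u N)), (is_lim_seq_minus' _ (fun _ => u N)); [exact Hl|].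
      apply is_lim_seq_const.
    - apply is_lim_seq_const. }
  exact Hle.
Qed.

Lemma continuity_pt_of_uniform_approx (F : R -> R) (f : nat -> R -> R) C c r : 0 < r ->
  (forall N y, Rabs (y - c) < r -> Rabs (F y - f N y) <= C / (INR N + 1)) ->
  (forall N, continuity_pt (f N) c) -> continuity_pt F c.
Proof.
  intros Hr Happrox Hcont eps Heps; simpl; unfold R_dist.
  destruct (exists_div_INR_lt (3 * C) eps Heps) as [N HN].
  destruct (Hcont N (eps / 3) ltac:(lra)) as [d [Hd Hf]]; simpl in Hf; unfold R_dist in Hf.
  exists (Rmin d r); split; [apply Rmin_pos; lra|]; intros y [_ Hy].
  pose proof (Rmin_l d r); pose proof (Rmin_r d r).
  pose proof (Happrox N y ltac:(lra)) as A1.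
  pose proof (Happrox N c ltac:(rewrite Rminus_diag, Rabs_R0; lra)) as A2.
  assert (A3 : Rabs (f N y - f N c) <= eps / 3).
  { destruct (Req_dec y c) as [->|Hne]; [rewrite Rminus_diag, Rabs_R0; lra|].
    left; apply Hf; split; [split; [exact I|auto]|lra]. }
  replace (3 * C / (INR N + 1)) with (3 * (C / (INR N + 1))) in HN
    by (pose proof (pos_INR N); field; lra).
  apply Rabs_le_between in A1; apply Rabs_le_between in A2; apply Rabs_le_between in A3.
  apply Rabs_lt_between; lra.
Qed.

(* Herglotz's trick: a maximum point m of D in ]0, 1[ propagates to m / 2^n, which tends
   to 0 where D vanishes. *)
Lemma herglotz_nonpos D :
  (forall c, 0 <= c <= 1 -> continuity_pt D c) -> D 0 = 0 -> D 1 = 0 ->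
  (forall x, 0 < x < 1 -> D (x / 2) + D ((x + 1) / 2) = 2 * D x) ->
  forall x, 0 <= x <= 1 -> D x <= 0.
Proof.
  intros Hc H0 H1 Hdup.
  destruct (continuity_ab_maj D 0 1 ltac:(lra) Hc) as [m [Hmax Hm]].
  intros x Hx; apply Rle_trans with (D m); [apply Hmax, Hx|].
  destruct (Rle_dec (D m) 0) as [|Hpos]; [assumption|exfalso; apply Rnot_le_lt in Hpos].
  assert (Hm0 : m <> 0) by (intros ->; lra); assert (Hm1 : m <> 1) by (intros ->; lra).
  assert (Hiter : forall n, D (m / 2 ^ n) = D m /\ 0 < m / 2 ^ n < 1).
  { induction n as [|n [E B]].
    - simpl; unfold Rdiv; rewrite Rinv_1, Rmult_1_r; split; [reflexivity|lra].
    - pose proof (Hdup _ B).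
      assert (D (m / 2 ^ n / 2) <= D m) by (apply Hmax; lra).
      assert (D ((m / 2 ^ n + 1) / 2) <= D m) by (apply Hmax; lra).
      replace (m / 2 ^ S n) with (m / 2 ^ n / 2) by (simpl; field; apply pow_nonzero; lra).
      split; lra. }
  destruct (Hc 0 ltac:(lra) (D m) Hpos) as [d [Hd Hdel]].
  destruct (exists_div_INR_lt 1 d Hd) as [N HN].
  destruct (Hiter N) as [E B].
  assert (Hpow : INR N + 1 <= 2 ^ N).
  { clear; induction N as [|N IH]; [simpl; lra|rewrite S_INR; simpl; pose proof (pos_INR N); lra]. }
  assert (m / 2 ^ N <= 1 / (INR N + 1)).
  { pose proof (pos_INR N); unfold Rdiv; apply Rmult_le_compat; try lra.
    - left; apply Rinv_0_lt_compat, pow_lt; lra.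
    - apply Rinv_le_contravar; lra. }
  specialize (Hdel (m / 2 ^ N)); simpl in Hdel; unfold R_dist in Hdel.
  rewrite H0, E, !Rminus_0_r, !Rabs_pos_eq in Hdel by lra.
  assert (D m < D m); [apply Hdel; split; [split; [exact I|lra]|lra]|lra].
Qed.

Lemma herglotz_zero D :
  (forall c, 0 <= c <= 1 -> continuity_pt D c) -> D 0 = 0 -> D 1 = 0 ->
  (forall x, 0 < x < 1 -> D (x / 2) + D ((x + 1) / 2) = 2 * D x) ->
  forall x, 0 <= x <= 1 -> D x = 0.
Proof.
  intros Hc H0 H1 Hdup x Hx.
  assert (D x <= 0) by (apply herglotz_nonpos; assumption).
  assert (- D x <= 0); [|lra].
  apply (herglotz_nonpos (fun y => - D y)); try lra.
  - intros c Hc'; apply continuity_pt_opp, Hc, Hc'.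
  - intros y Hy; specialize (Hdup y Hy); lra.
Qed.

Lemma RInt_Chasles3 (f : R -> R) u v w z : (forall x y, ex_RInt f x y) ->
  RInt f u z = RInt f u v + RInt f v w + RInt f w z.
Proof.
  intros Hex.
  rewrite <- (RInt_Chasles (V := R_CompleteNormedModule) f u w z), <- (RInt_Chasles f u v w)
    by apply Hex.
  reflexivity.
Qed.

Lemma is_RInt_pow_01 N : is_RInt (fun t => t ^ N) 0 1 (1 / (INR N + 1)).
Proof.
  pose proof (pos_INR N).
  replace (1 / (INR N + 1)) with (minus (1 ^ S N / (INR N + 1)) (0 ^ S N / (INR N + 1)))
    by (rewrite pow1, pow_i by lia; unfold minus, plus, opp; simpl; field; lra).
  apply (is_RInt_derive (V := R_CompleteNormedModule) (fun t => t ^ S N / (INR N + 1))).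
  - intros x _; auto_derive; [lra|].
    replace (match N with | 0%nat => 1 | S _ => INR N + 1 end) with (INR N + 1)
      by (destruct N; simpl; lra).
    field; lra.
  - intros x _; apply (ex_derive_continuous (fun t => t ^ N)); auto_derive; exact I.
Qed.

Lemma rpow_Rpower x c : 0 < x -> rpow x c = Rpower x c.
Proof. intros Hx; unfold rpow; destruct (Rle_dec x 0); [lra|reflexivity]. Qed.

Lemma rpow_nonpos x c : x <= 0 -> rpow x c = 0.
Proof. intros Hx; unfold rpow; destruct (Rle_dec x 0); [reflexivity|lra]. Qed.

Lemma rpow_gt0 x c : 0 < x -> 0 < rpow x c.
Proof. intros Hx; rewrite rpow_Rpower by lra; apply exp_pos. Qed.

Lemma rpow_ge0 x c : 0 <= rpow x c.
Proof.
  destruct (Rle_dec x 0); [rewrite rpow_nonpos; lra|].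
  left; apply rpow_gt0; lra.
Qed.

Lemma rpow_1_l c : rpow 1 c = 1.
Proof. rewrite rpow_Rpower by lra; unfold Rpower; rewrite ln_1, Rmult_0_r; apply exp_0. Qed.

Lemma rpow_1_r x : 0 < x -> rpow x 1 = x.
Proof. intros Hx; rewrite rpow_Rpower by lra; apply Rpower_1, Hx. Qed.

Lemma rpow_plus x c d : 0 < x -> rpow x (c + d) = rpow x c * rpow x d.
Proof. intros Hx; rewrite !rpow_Rpower by lra; apply Rpower_plus. Qed.

Lemma rpow_INR x n : 0 < x -> rpow x (INR n) = x ^ n.
Proof. intros Hx; rewrite rpow_Rpower by lra; apply Rpower_pow, Hx. Qed.

Lemma rpow_mult_distr x y c : 0 < x -> 0 < y -> rpow (x * y) c = rpow x c * rpow y c.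
Proof.
  intros Hx Hy; rewrite !rpow_Rpower by nra.
  symmetry; apply Rpower_mult_distr; lra.
Qed.

Lemma rpow_rpow x c d : 0 < x -> rpow (rpow x c) d = rpow x (c * d).
Proof.
  intros Hx; rewrite (rpow_Rpower (rpow x c)) by (apply rpow_gt0, Hx).
  rewrite !rpow_Rpower by lra; apply Rpower_mult.
Qed.

Lemma rpow_lt_exponent t c d : 0 < t < 1 -> c < d -> rpow t d < rpow t c.
Proof.
  intros Ht Hcd; rewrite !rpow_Rpower by lra; apply exp_increasing.
  assert (ln t < 0) by (rewrite <- ln_1; apply ln_increasing; lra); nra.
Qed.

Lemma rpow_between t c : 0 < t < 1 -> 0 < c < 1 -> t < rpow t c < 1.
Proof.
  intros Ht Hc; split.
  - rewrite <- (rpow_1_r t) at 1 by lra; apply rpow_lt_exponent; lra.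
  - replace 1 with (rpow t 0); [apply rpow_lt_exponent; lra|].
    rewrite rpow_Rpower by lra; apply Rpower_O; lra.
Qed.

Lemma rpow_le_affine t c : 0 < t -> 0 < c < 1 -> rpow t c <= c * t + (1 - c).
Proof.
  intros Ht Hc; set (m := c * t + (1 - c)).
  assert (Hm : 0 < m) by (unfold m; nra).
  assert (H1 := exp_ineq1_le (ln (t / m))).
  assert (H2 := exp_ineq1_le (ln (/ m))).
  rewrite exp_ln in H1 by (apply Rdiv_lt_0_compat; lra).
  rewrite exp_ln in H2 by (apply Rinv_0_lt_compat; lra).
  rewrite ln_div in H1 by lra; rewrite ln_Rinv in H2 by lra.
  assert (Hsum : c * (t / m) + (1 - c) * / m = 1) by (unfold m in *; field; lra).
  assert (Hln : c * ln t <= ln m) by nra.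
  rewrite rpow_Rpower by lra; unfold Rpower.
  rewrite <- (exp_ln m) by lra.
  destruct (Rle_lt_or_eq_dec _ _ Hln) as [Hl| ->]; [left; apply exp_increasing|]; lra.
Qed.

Lemma is_derive_rpow c x : 0 < x -> is_derive (fun t => rpow t c) x (c * rpow x (c - 1)).
Proof.
  intros Hx.
  apply is_derive_ext_loc with (f := fun t => exp (c * ln t)).
  - exists (mkposreal _ Hx); intros y Hy.
    apply Rabs_lt_between' in Hy; rewrite rpow_Rpower; [reflexivity|simpl in Hy; lra].
  - auto_derive; [lra|].
    rewrite rpow_Rpower by lra; unfold Rpower.
    replace ((c - 1) * ln x) with (c * ln x + - ln x) by ring.
    rewrite exp_plus, exp_Ropp, exp_ln by lra; field; lra.
Qed.

Lemma continuous_rpow c x : 0 < c -> continuous (fun t => rpow t c) x.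
Proof.
  intros Hc; destruct (Rtotal_order x 0) as [Hx|[->|Hx]].
  - apply continuous_ext_loc with (g := fun _ => 0); [|apply continuous_const].
    assert (H : 0 < - x) by lra.
    exists (mkposreal _ H); intros y Hy.
    apply Rabs_lt_between' in Hy; simpl in Hy; rewrite rpow_nonpos; lra.
  - apply continuity_pt_filterlim; intros eps Heps.
    exists (exp (ln eps / c)); split; [apply exp_pos|].
    intros y [_ Hy]; simpl in Hy |- *; unfold R_dist in *.
    rewrite (rpow_nonpos 0), Rminus_0_r in * by lra.
    destruct (Rle_dec y 0); [rewrite rpow_nonpos, Rabs_R0; lra|].
    rewrite Rabs_pos_eq by apply rpow_ge0; rewrite Rabs_pos_eq in Hy by lra.
    rewrite rpow_Rpower by lra; unfold Rpower; rewrite <- (exp_ln eps) by lra.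
    apply exp_increasing; apply ln_increasing in Hy; [|lra].
    rewrite ln_exp in Hy; apply Rmult_lt_compat_l with (r := c) in Hy; [|lra].
    replace (c * (ln eps / c)) with (ln eps) in Hy by (field; lra); lra.
  - apply (ex_derive_continuous (fun t => rpow t c)); eexists; apply is_derive_rpow, Hx.
Qed.

Lemma is_derive_rpow_0 c : 1 < c -> is_derive (fun t => rpow t c) 0 0.
Proof.
  intros Hc; apply is_derive_Reals; intros eps Heps.
  assert (Hcont := continuous_rpow (c - 1) 0 ltac:(lra)).
  apply continuity_pt_filterlim in Hcont.
  destruct (Hcont eps Heps) as [d [Hd Hsmall]].
  exists (mkposreal _ Hd); intros h Hh0 Hh; simpl in Hh.
  rewrite Rplus_0_l, (rpow_nonpos 0), !Rminus_0_r by lra.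
  destruct (Rle_dec h 0).
  - rewrite rpow_nonpos by lra; unfold Rdiv; rewrite Rmult_0_l, Rabs_R0; lra.
  - replace c with ((c - 1) + 1) by ring; rewrite rpow_plus, rpow_1_r by lra.
    replace (rpow h (c - 1) * h / h) with (rpow h (c - 1)) by (field; lra).
    specialize (Hsmall h); simpl in Hsmall; unfold R_dist in Hsmall.
    rewrite (rpow_nonpos 0), !Rminus_0_r in Hsmall by lra.
    apply Hsmall; repeat split; auto.
Qed.

Lemma is_RInt_rpow_01 c : 0 < c -> is_RInt (fun t => rpow t c) 0 1 (1 / (c + 1)).
Proof.
  intros Hc.
  replace (1 / (c + 1)) with (minus (/ (c + 1) * rpow 1 (c + 1)) (/ (c + 1) * rpow 0 (c + 1)))
    by (rewrite rpow_1_l, (rpow_nonpos 0) by lra; unfold minus, plus, opp; simpl; field; lra).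
  apply (is_RInt_derive (fun t => / (c + 1) * rpow t (c + 1))).
  - intros x Hx; rewrite Rmin_left, Rmax_right in Hx by lra.
    destruct (Req_dec x 0) as [->|Hx0].
    + rewrite (rpow_nonpos 0) by lra; replace 0 with (/ (c + 1) * 0) at 2 by ring.
      apply is_derive_scal, is_derive_rpow_0; lra.
    + replace (rpow x c) with (/ (c + 1) * ((c + 1) * rpow x (c + 1 - 1)))
        by (replace (c + 1 - 1) with c by ring; field; lra).
      apply is_derive_scal, is_derive_rpow; lra.
  - intros x _; apply continuous_rpow, Hc.
Qed.

Lemma rpow_Derive c t : 0 < t -> Derive (fun x => rpow x c) t = c * rpow t c / t.
Proof.
  intros Ht; apply is_derive_unique.
  replace (c * rpow t c / t) with (c * rpow t (c - 1)); [apply is_derive_rpow, Ht|].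
  replace (rpow t c) with (rpow t ((c - 1) + 1)) by (f_equal; ring).
  rewrite rpow_plus, rpow_1_r by lra; field; lra.
Qed.

Ltac derive_side_conditions :=
  repeat split; try (eexists; apply is_derive_rpow); try lra;
  try (apply Rmult_integral_contrapositive_currified; lra).

Lemma is_lim_rpow (c x : R) : 0 < c -> is_lim (fun t => rpow t c) x (rpow x c).
Proof.
  intros Hc; apply (is_lim_continuity (fun t => rpow t c)), continuity_pt_filterlim.
  apply continuous_rpow, Hc.
Qed.

Lemma is_lim_rpow_0 c : 0 < c -> is_lim (fun t => rpow t c) 0 0.
Proof. intros Hc; rewrite <- (rpow_nonpos 0 c) at 2 by lra; apply is_lim_rpow, Hc. Qed.

Lemma is_lim_1_minus_rpow_0 c : 0 < c -> is_lim (fun t => 1 - rpow t c) 0 1.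
Proof.
  intros Hc; replace (Finite 1) with (Finite (1 - 0)) by (f_equal; ring).
  apply (is_lim_minus' (fun _ => 1)); [apply is_lim_const|apply is_lim_rpow_0, Hc].
Qed.

Lemma is_derive_1_minus_rpow_1 c : is_derive (fun t => 1 - rpow t c) 1 (- c).
Proof.
  auto_derive; [derive_side_conditions|].
  rewrite rpow_Derive, rpow_1_l by lra; field.
Qed.

Section Phi.

Variable a : R.
Hypothesis ha : 0 < a.

Local Notation p := (x0 a).
Local Notation phi := (phi_a a).

Lemma x0_bounds : 0 < p < 1.
Proof.
  unfold x0; split; [apply Rdiv_lt_0_compat; lra|].
  apply Rmult_lt_reg_r with (a + 1); [lra|]; unfold Rdiv; rewrite Rmult_assoc, Rinv_l; lra.
Qed.

Lemma phi_eq x : 0 < x -> phi x = rpow x a * (1 - x).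
Proof. intros Hx; unfold phi_a; rewrite rpow_plus, rpow_1_r by lra; ring. Qed.

Lemma phi_0 : phi 0 = 0.
Proof. unfold phi_a; rewrite !rpow_nonpos by lra; ring. Qed.

Lemma phi_1 : phi 1 = 0.
Proof. rewrite phi_eq by lra; ring. Qed.

Lemma continuous_phi x : continuity_pt phi x.
Proof. apply continuity_pt_minus; apply continuity_pt_filterlim, continuous_rpow; lra. Qed.

Lemma is_derive_phi x : 0 < x -> is_derive phi x (rpow x (a - 1) * (a - (a + 1) * x)).
Proof.
  intros Hx.
  replace (rpow x (a - 1) * (a - (a + 1) * x))
    with (a * rpow x (a - 1) - (a + 1) * rpow x (a + 1 - 1))
    by (replace (a + 1 - 1) with ((a - 1) + 1) by ring; rewrite rpow_plus, rpow_1_r by lra; ring).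
  apply (is_derive_minus (fun t => rpow t a) (fun t => rpow t (a + 1))); apply is_derive_rpow, Hx.
Qed.

Lemma phi_increasing x y : 0 <= x -> x < y -> y <= p -> phi x < phi y.
Proof.
  pose proof x0_bounds.
  assert (Hp : a - (a + 1) * p = 0) by (unfold x0; field; lra).
  apply (strictly_increasing_of_derive phi (fun t => rpow t (a - 1) * (a - (a + 1) * t)) 0 p).
  - intros z Hz; apply is_derive_phi; lra.
  - intros z _; apply continuous_phi.
  - intros z Hz; apply Rmult_le_pos; [apply rpow_ge0|nra].
  - intros z Hz; apply Rmult_lt_0_compat; [apply rpow_gt0; lra|nra].
Qed.

Lemma phi_decreasing x y : p <= x -> x < y -> y <= 1 -> phi y < phi x.
Proof.
  pose proof x0_bounds.
  assert (Hp : a - (a + 1) * p = 0) by (unfold x0; field; lra).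
  apply (strictly_decreasing_of_derive phi (fun t => rpow t (a - 1) * (a - (a + 1) * t)) p 1).
  - intros z Hz; apply is_derive_phi; lra.
  - intros z _; apply continuous_phi.
  - intros z Hz; assert (0 <= rpow z (a - 1)) by apply rpow_ge0.
    assert (a - (a + 1) * z <= 0) by nra; nra.
  - intros z Hz; assert (0 < rpow z (a - 1)) by (apply rpow_gt0; lra).
    assert (a - (a + 1) * z < 0) by nra; nra.
Qed.

Lemma phi_le_increasing x y : 0 <= x -> x <= y -> y <= p -> phi x <= phi y.
Proof. intros; destruct (Req_dec x y) as [->|]; [lra|left; apply phi_increasing; lra]. Qed.

Lemma phi_le_decreasing x y : p <= x -> x <= y -> y <= 1 -> phi y <= phi x.
Proof. intros; destruct (Req_dec x y) as [->|]; [lra|left; apply phi_decreasing; lra]. Qed.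

Lemma phi_range x : 0 <= x <= 1 -> 0 <= phi x <= phi p.
Proof.
  intros Hx; pose proof x0_bounds; destruct (Rle_dec x p).
  - rewrite <- phi_0; split; apply phi_le_increasing; lra.
  - rewrite <- phi_1; split; apply phi_le_decreasing; lra.
Qed.

Lemma r_inv_spec v : 0 <= v <= phi p -> p <= r_inv a v <= 1 /\ phi (r_inv a v) = v.
Proof.
  intros Hv; unfold r_inv; apply epsilon_spec; pose proof x0_bounds.
  destruct (Req_dec v (phi p)) as [->|Hvp]; [exists p; split; [lra|reflexivity]|].
  destruct (Req_dec v 0) as [->|Hv0]; [exists 1; split; [lra|apply phi_1]|].
  assert (Hc : continuity (fun y => v - phi y)).
  { intro y; apply continuity_pt_minus; [apply continuity_pt_const; intros u w; reflexivity|].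
    apply continuous_phi. }
  destruct (IVT _ p 1 Hc) as [z [Hz Hz0]]; [lra|lra|rewrite phi_1; lra|].
  exists z; split; [exact Hz|lra].
Qed.

Lemma l_inv_spec v : 0 <= v <= phi p -> 0 <= l_inv a v <= p /\ phi (l_inv a v) = v.
Proof.
  intros Hv; unfold l_inv; apply epsilon_spec; pose proof x0_bounds.
  destruct (Req_dec v (phi p)) as [->|Hvp]; [exists p; split; [lra|reflexivity]|].
  destruct (Req_dec v 0) as [->|Hv0]; [exists 0; split; [lra|apply phi_0]|].
  assert (Hc : continuity (fun y => phi y - v)).
  { intro y; apply continuity_pt_minus; [apply continuous_phi|].
    apply continuity_pt_const; intros u w; reflexivity. }
  destruct (IVT _ 0 p Hc) as [z [Hz Hz0]]; [lra|rewrite phi_0; lra|lra|].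
  exists z; split; [exact Hz|lra].
Qed.

Lemma r_inv_unique y v : p <= y <= 1 -> phi y = v -> r_inv a v = y.
Proof.
  intros Hy <-; pose proof x0_bounds.
  destruct (r_inv_spec (phi y)) as [Hr Hphi]; [apply phi_range; lra|].
  destruct (Rtotal_order (r_inv a (phi y)) y) as [Hlt|[Heq|Hgt]]; [|assumption|].
  - assert (phi y < phi (r_inv a (phi y))) by (apply phi_decreasing; lra); lra.
  - assert (phi (r_inv a (phi y)) < phi y) by (apply phi_decreasing; lra); lra.
Qed.

Lemma l_inv_unique y v : 0 <= y <= p -> phi y = v -> l_inv a v = y.
Proof.
  intros Hy <-; pose proof x0_bounds.
  destruct (l_inv_spec (phi y)) as [Hl Hphi]; [apply phi_range; lra|].
  destruct (Rtotal_order (l_inv a (phi y)) y) as [Hlt|[Heq|Hgt]]; [|assumption|].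
  - assert (phi (l_inv a (phi y)) < phi y) by (apply phi_increasing; lra); lra.
  - assert (phi y < phi (l_inv a (phi y))) by (apply phi_increasing; lra); lra.
Qed.

Definition twin_r x := r_inv a (phi x).
Definition twin_l x := l_inv a (phi x).

Lemma twin_r_spec x : 0 <= x <= p -> p <= twin_r x <= 1 /\ phi (twin_r x) = phi x.
Proof. intros; pose proof x0_bounds; apply r_inv_spec, phi_range; lra. Qed.

Lemma twin_l_spec x : p <= x <= 1 -> 0 <= twin_l x <= p /\ phi (twin_l x) = phi x.
Proof. intros; pose proof x0_bounds; apply l_inv_spec, phi_range; lra. Qed.

Lemma twin_r_decreasing x y : 0 <= x -> x < y -> y <= p -> twin_r y < twin_r x.
Proof.
  intros; destruct (twin_r_spec x) as [Hx Hphix]; [lra|].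
  destruct (twin_r_spec y) as [Hy Hphiy]; [lra|].
  assert (phi x < phi y) by (apply phi_increasing; lra).
  destruct (Rlt_le_dec (twin_r y) (twin_r x)) as [|Hle]; [assumption|].
  assert (phi (twin_r y) <= phi (twin_r x)) by (apply phi_le_decreasing; lra); lra.
Qed.

Lemma twin_l_decreasing x y : p <= x -> x < y -> y <= 1 -> twin_l y < twin_l x.
Proof.
  intros; destruct (twin_l_spec x) as [Hx Hphix]; [lra|].
  destruct (twin_l_spec y) as [Hy Hphiy]; [lra|].
  assert (phi y < phi x) by (apply phi_decreasing; lra).
  destruct (Rlt_le_dec (twin_l y) (twin_l x)) as [|Hle]; [assumption|].
  assert (phi (twin_l x) <= phi (twin_l y)) by (apply phi_le_increasing; lra); lra.
Qed.

Lemma twin_r_onto w : p <= w <= 1 -> exists x, 0 <= x <= p /\ twin_r x = w.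
Proof.
  intros Hw; exists (twin_l w); destruct (twin_l_spec w Hw) as [Hl Hphi].
  split; [exact Hl|]; apply r_inv_unique; [exact Hw|symmetry; exact Hphi].
Qed.

Lemma twin_l_onto w : 0 <= w <= p -> exists x, p <= x <= 1 /\ twin_l x = w.
Proof.
  intros Hw; exists (twin_r w); destruct (twin_r_spec w Hw) as [Hr Hphi].
  split; [exact Hr|]; apply l_inv_unique; [exact Hw|symmetry; exact Hphi].
Qed.

(* Clamping extends the branches to continuous functions on all of R, which is the form
   Coquelicot's integration lemmas expect. *)
Definition twin_r_clamped x := twin_r (clamp 0 p x).
Definition twin_l_clamped x := twin_l (clamp p 1 x).

Lemma continuous_twin_r_clamped c : continuity_pt twin_r_clamped c.
Proof.
  pose proof x0_bounds.
  assert (H0 : twin_r 0 = 1) by (apply r_inv_unique; [lra|rewrite phi_0, phi_1; reflexivity]).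
  assert (Hp : twin_r p = p) by (apply r_inv_unique; [lra|reflexivity]).
  apply continuous_clamp_of_decreasing; [exact twin_r_decreasing| |lra].
  rewrite H0, Hp; exact twin_r_onto.
Qed.

Lemma continuous_twin_l_clamped c : continuity_pt twin_l_clamped c.
Proof.
  pose proof x0_bounds.
  assert (H1 : twin_l 1 = 0) by (apply l_inv_unique; [lra|rewrite phi_0, phi_1; reflexivity]).
  assert (Hp : twin_l p = p) by (apply l_inv_unique; [lra|reflexivity]).
  apply continuous_clamp_of_decreasing; [exact twin_l_decreasing| |lra].
  rewrite H1, Hp; exact twin_l_onto.
Qed.

End Phi.

(** * A parametrization of the level sets of phi_a *)

Section Parametrization.

Variable a : R.
Hypothesis ha : 0 < a.

Local Notation p := (x0 a).
Local Notation q := (1 - x0 a).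
Local Notation phi := (phi_a a).

(* t = (x / y)^(a + 1) parametrizes the pairs (x, y) = (param_l t, param_r t)
   with phi x = phi y. *)
Definition param_l t := (rpow t q - t) / (1 - t).
Definition param_r t := (1 - rpow t p) / (1 - t).

Lemma rpow_x0_mul t : 0 < t -> rpow t p * rpow t q = t.
Proof.
  intros Ht; rewrite <- rpow_plus by lra; replace (p + q) with 1 by ring; apply rpow_1_r, Ht.
Qed.

Lemma param_range t : 0 < t < 1 -> 0 < param_l t <= p /\ p <= param_r t < 1.
Proof.
  intros Ht; pose proof (x0_bounds a ha) as Hp.
  unfold param_l, param_r; repeat split.
  - pose proof (rpow_between t q Ht ltac:(lra)); apply Rdiv_lt_0_compat; lra.
  - pose proof (rpow_le_affine t q ltac:(lra) ltac:(lra)); apply Rle_div_l; [lra|].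
    replace (p * (1 - t)) with (q * t + (1 - q) - t) by ring; lra.
  - pose proof (rpow_le_affine t p ltac:(lra) Hp); apply (Rle_div_r p); [lra|].
    replace (p * (1 - t)) with (1 - (p * t + (1 - p))) by ring; lra.
  - pose proof (rpow_between t p Ht Hp); apply Rlt_div_l; lra.
Qed.

Lemma phi_param t : 0 < t < 1 -> phi (param_l t) = phi (param_r t).
Proof.
  intros Ht; pose proof (x0_bounds a ha).
  destruct (param_range t Ht) as [[Hl _] [Hr _]].
  rewrite !phi_eq by lra.
  assert (Htqp := rpow_x0_mul t ltac:(lra)).
  assert (Hlr : param_l t = rpow t q * param_r t).
  { unfold param_l, param_r; replace (rpow t q - t) with (rpow t q * (1 - rpow t p)) by nra.
    field; lra. }
  assert (Hqa : q * a = p) by (unfold x0; field; lra).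
  assert (Hpow : rpow (param_l t) a = rpow t p * rpow (param_r t) a).
  { rewrite Hlr, rpow_mult_distr, rpow_rpow, Hqa by (try apply rpow_gt0; lra); reflexivity. }
  assert (Hr1 : param_r t * (1 - t) = 1 - rpow t p) by (unfold param_r; field; lra).
  rewrite Hpow; replace (1 - param_r t) with (rpow t p * (1 - param_l t)) by (rewrite Hlr; nra).
  ring.
Qed.

Lemma twin_r_param_l t : 0 < t < 1 -> twin_r a (param_l t) = param_r t.
Proof.
  intros Ht; destruct (param_range t Ht); apply (r_inv_unique a ha); [lra|].
  symmetry; apply phi_param, Ht.
Qed.

Lemma twin_l_param_r t : 0 < t < 1 -> twin_l a (param_r t) = param_l t.
Proof.
  intros Ht; destruct (param_range t Ht); apply (l_inv_unique a ha); [lra|].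
  apply phi_param, Ht.
Qed.

Definition param_l' t := (q * rpow t q / t - 1) / (1 - t) + (rpow t q - t) / ((1 - t) * (1 - t)).
Definition param_r' t := - (p * rpow t p / t) / (1 - t) + (1 - rpow t p) / ((1 - t) * (1 - t)).

Lemma is_derive_param_l t : 0 < t < 1 -> is_derive param_l t (param_l' t).
Proof.
  intros Ht; unfold param_l; auto_derive; [derive_side_conditions|].
  unfold param_l'; rewrite rpow_Derive by lra; field; lra.
Qed.

Lemma is_derive_param_r t : 0 < t < 1 -> is_derive param_r t (param_r' t).
Proof.
  intros Ht; unfold param_r; auto_derive; [derive_side_conditions|].
  unfold param_r'; rewrite rpow_Derive by lra; field; lra.
Qed.

Lemma continuous_param_l' t : 0 < t < 1 -> continuous param_l' t.
Proof.
  intros Ht; apply (ex_derive_continuous param_l'); unfold param_l'.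
  auto_derive; derive_side_conditions.
Qed.

Lemma continuous_param_r' t : 0 < t < 1 -> continuous param_r' t.
Proof.
  intros Ht; apply (ex_derive_continuous param_r'); unfold param_r'.
  auto_derive; derive_side_conditions.
Qed.

Definition kernel t := (rpow t p - rpow t q) / (1 - t).

Definition ratio_q t := (1 - rpow t q) / (1 - t).
Definition prim_corr t :=
  ((q - p) * t - q * rpow t q + p * rpow t p) / (1 - t) - p * rpow t q + q * rpow t p.

(* [param_r * param_l'] has no elementary antiderivative, but it differs from one by
   a multiple of [kernel]; [prim_l] and [prim_r] are those antiderivatives. *)
Definition prim_l t := - (1 / 2) * (param_r t * ratio_q t + prim_corr t).
Definition prim_r t := prim_l t + param_r t + prim_corr t.

Lemma is_derive_prim_l t : 0 < t < 1 ->
  is_derive prim_l t (param_r t * param_l' t + p * q / 2 * kernel t).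
Proof.
  intros Ht; unfold prim_l, param_r, ratio_q, prim_corr; auto_derive; [derive_side_conditions|].
  unfold param_l', kernel; rewrite !rpow_Derive by lra.
  assert (Hpq := rpow_x0_mul t ltac:(lra)).
  assert (0 < rpow t p) by (apply rpow_gt0; lra); assert (0 < rpow t q) by (apply rpow_gt0; lra).
  set (A := rpow t p) in *; set (B := rpow t q) in *; clearbody A B.
  rewrite <- Hpq; field; repeat split; lra.
Qed.

Lemma is_derive_prim_r t : 0 < t < 1 ->
  is_derive prim_r t (param_l t * param_r' t - p * q / 2 * kernel t).
Proof.
  intros Ht; unfold prim_r, prim_l, param_r, ratio_q, prim_corr.
  auto_derive; [derive_side_conditions|].
  unfold param_r', kernel, param_l; rewrite !rpow_Derive by lra.
  assert (Hpq := rpow_x0_mul t ltac:(lra)).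
  assert (0 < rpow t p) by (apply rpow_gt0; lra); assert (0 < rpow t q) by (apply rpow_gt0; lra).
  set (A := rpow t p) in *; set (B := rpow t q) in *; clearbody A B.
  rewrite <- Hpq; field; repeat split; lra.
Qed.

Lemma continuous_prim_l' t : 0 < t < 1 ->
  continuous (fun t => param_r t * param_l' t + p * q / 2 * kernel t) t.
Proof.
  intros Ht; apply (ex_derive_continuous (fun t => param_r t * param_l' t + p * q / 2 * kernel t)).
  unfold param_r, param_l', kernel; auto_derive; derive_side_conditions.
Qed.

Lemma continuous_prim_r' t : 0 < t < 1 ->
  continuous (fun t => param_l t * param_r' t - p * q / 2 * kernel t) t.
Proof.
  intros Ht; apply (ex_derive_continuous (fun t => param_l t * param_r' t - p * q / 2 * kernel t)).
  unfold param_l, param_r', kernel; auto_derive; derive_side_conditions.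
Qed.

End Parametrization.

Section Limits.

Variable a : R.
Hypothesis ha : 0 < a.

Local Notation p := (x0 a).
Local Notation q := (1 - x0 a).

Let pq_pos : 0 < p /\ 0 < q.
Proof. pose proof (x0_bounds a ha); lra. Qed.

Lemma param_l_lim_0 : is_lim (param_l a) 0 0.
Proof.
  destruct pq_pos; apply (is_lim_div_one_minus _ 0 (0 - 0)); [lra| |field].
  apply is_lim_minus'; [apply is_lim_rpow_0; lra|apply is_lim_id].
Qed.

Lemma param_r_lim_0 : is_lim (param_r a) 0 1.
Proof.
  destruct pq_pos; apply (is_lim_div_one_minus _ 0 1); [lra| |field].
  apply is_lim_1_minus_rpow_0; lra.
Qed.

Lemma ratio_q_lim_0 : is_lim (ratio_q a) 0 1.
Proof.
  destruct pq_pos; apply (is_lim_div_one_minus _ 0 1); [lra| |field].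
  apply is_lim_1_minus_rpow_0; lra.
Qed.

Lemma prim_corr_lim_0 : is_lim (prim_corr a) 0 0.
Proof.
  destruct pq_pos.
  assert (Hlim : is_lim (prim_corr a) 0 (0 - p * 0 + q * 0)).
  { apply is_lim_plus'; [apply is_lim_minus'|apply is_lim_scal_fin, is_lim_rpow_0; lra].
    - apply (is_lim_div_one_minus _ 0 ((q - p) * 0 - q * 0 + p * 0)); [lra| |field].
      apply is_lim_plus'; [apply is_lim_minus'|]; apply is_lim_scal_fin;
        [apply is_lim_id|apply is_lim_rpow_0; lra|apply is_lim_rpow_0; lra].
    - apply is_lim_scal_fin, is_lim_rpow_0; lra. }
  replace (0 - p * 0 + q * 0) with 0 in Hlim by ring; exact Hlim.
Qed.

Lemma param_l_lim_1 : is_lim (param_l a) 1 p.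
Proof.
  destruct pq_pos; apply (is_lim_div_one_minus_at_1 _ (q - 1)); [rewrite rpow_1_l; ring| |ring].
  auto_derive; [derive_side_conditions|].
  rewrite rpow_Derive, rpow_1_l by lra; field.
Qed.

Lemma param_r_lim_1 : is_lim (param_r a) 1 p.
Proof.
  apply (is_lim_div_one_minus_at_1 _ (- p)); [rewrite rpow_1_l; ring| |ring].
  apply is_derive_1_minus_rpow_1.
Qed.

Lemma ratio_q_lim_1 : is_lim (ratio_q a) 1 q.
Proof.
  apply (is_lim_div_one_minus_at_1 _ (- q)); [rewrite rpow_1_l; ring| |ring].
  apply is_derive_1_minus_rpow_1.
Qed.

Lemma kernel_lim_1 : is_lim (kernel a) 1 (q - p).
Proof.
  apply (is_lim_div_one_minus_at_1 _ (p - q)); [rewrite !rpow_1_l; ring| |ring].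
  auto_derive; [derive_side_conditions|].
  rewrite !rpow_Derive, !rpow_1_l by lra; field.
Qed.

Lemma prim_corr_lim_1 : is_lim (prim_corr a) 1 (q - p).
Proof.
  destruct pq_pos; unfold prim_corr.
  replace (q - p) with (0 - p * rpow 1 q + q * rpow 1 p) by (rewrite !rpow_1_l; ring).
  apply is_lim_plus'; [apply is_lim_minus'|apply is_lim_scal_fin, is_lim_rpow; lra].
  - apply (is_lim_div_one_minus_at_1 _ 0); [rewrite !rpow_1_l; ring| |ring].
    auto_derive; [derive_side_conditions|].
    rewrite !rpow_Derive, !rpow_1_l by lra; field.
  - apply is_lim_scal_fin, is_lim_rpow; lra.
Qed.

Definition prim_l_at_1 := - (1 / 2) * (p * q + (q - p)).

Lemma prim_l_lim_0 : is_lim (prim_l a) 0 (- (1 / 2)).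
Proof.
  replace (- (1 / 2)) with (- (1 / 2) * (1 * 1 + 0)) by ring.
  apply is_lim_scal_fin, is_lim_plus'; [apply is_lim_mult_fin|].
  - apply param_r_lim_0.
  - apply ratio_q_lim_0.
  - apply prim_corr_lim_0.
Qed.

Lemma prim_l_lim_1 : is_lim (prim_l a) 1 prim_l_at_1.
Proof.
  apply is_lim_scal_fin, is_lim_plus'; [apply is_lim_mult_fin|].
  - apply param_r_lim_1.
  - apply ratio_q_lim_1.
  - apply prim_corr_lim_1.
Qed.

Lemma prim_r_lim_0 : is_lim (prim_r a) 0 (1 / 2).
Proof.
  replace (1 / 2) with (- (1 / 2) + 1 + 0) by field.
  apply is_lim_plus'; [apply is_lim_plus'|].
  - apply prim_l_lim_0.
  - apply param_r_lim_0.
  - apply prim_corr_lim_0.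
Qed.

Lemma prim_r_lim_1 : is_lim (prim_r a) 1 (prim_l_at_1 + q).
Proof.
  replace (prim_l_at_1 + q) with (prim_l_at_1 + p + (q - p)) by ring.
  apply is_lim_plus'; [apply is_lim_plus'|].
  - apply prim_l_lim_1.
  - apply param_r_lim_1.
  - apply prim_corr_lim_1.
Qed.

End Limits.

(** * The two integrals in terms of the kernel integral *)

Section Integrals.

Variable a : R.
Hypothesis ha : 0 < a.

Local Notation p := (x0 a).
Local Notation q := (1 - x0 a).

Let pq_pos : 0 < p /\ 0 < q.
Proof. pose proof (x0_bounds a ha); lra. Qed.

Definition kernel_ext t := if Req_EM_T t 1 then q - p else kernel a t.

Definition kernel_integral := RInt kernel_ext 0 1.

Lemma continuous_kernel_ext t : t <= 1 -> continuity_pt kernel_ext t.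
Proof.
  destruct pq_pos; intros Ht; destruct (Rle_lt_or_eq_dec _ _ Ht) as [Hlt| ->].
  - apply continuity_pt_ext_loc with (f := kernel a).
    + assert (Hd : 0 < 1 - t) by lra; exists (mkposreal _ Hd); intros y Hy.
      apply Rabs_lt_between' in Hy; simpl in Hy.
      unfold kernel_ext; destruct (Req_EM_T y 1); [lra|reflexivity].
    + apply continuity_pt_of_is_lim.
      apply (is_lim_div_one_minus (fun t => rpow t p - rpow t q) t (rpow t p - rpow t q));
        [lra| |reflexivity].
      apply is_lim_minus'; apply is_lim_rpow; lra.
  - apply continuity_pt_of_is_lim; unfold kernel_ext at 2; destruct (Req_EM_T 1 1) as [_|]; [|lra].
    apply is_lim_ext_loc with (f := kernel a); [|exact (kernel_lim_1 a)].
    exists (mkposreal _ Rlt_0_1); intros y _ Hy.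
    unfold kernel_ext; destruct (Req_EM_T y 1); [contradiction|reflexivity].
Qed.

Lemma kernel_ext_bound t : 0 <= t <= 1 -> Rabs (kernel_ext t) <= 1.
Proof.
  destruct pq_pos; intros Ht; unfold kernel_ext; destruct (Req_EM_T t 1); [apply Rabs_le; lra|].
  unfold kernel; destruct (Req_dec t 0) as [->|Ht0].
  - rewrite !rpow_nonpos by lra; unfold Rdiv; rewrite Rminus_diag, Rmult_0_l, Rabs_R0; lra.
  - pose proof (rpow_between t p ltac:(lra) ltac:(lra)).
    pose proof (rpow_between t q ltac:(lra) ltac:(lra)).
    rewrite Rabs_div, (Rabs_pos_eq (1 - t)) by lra.
    apply Rle_div_l; [lra|]; apply Rabs_le; lra.
Qed.

Lemma ex_RInt_kernel_ext u v : 0 <= u -> u <= v -> v <= 1 -> ex_RInt kernel_ext u v.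
Proof.
  intros; apply (ex_RInt_continuous (V := R_CompleteNormedModule)); intros z Hz.
  rewrite Rmin_left, Rmax_right in Hz by lra.
  apply continuity_pt_filterlim, continuous_kernel_ext; lra.
Qed.

Lemma RInt_kernel_approx e T : 0 < e -> e <= T -> T < 1 ->
  Rabs (RInt (kernel a) e T - kernel_integral) <= e + (1 - T).
Proof.
  intros He HeT HT.
  assert (Hext : RInt (kernel a) e T = RInt kernel_ext e T).
  { apply RInt_ext; rewrite Rmin_left, Rmax_right by lra; intros x Hx.
    unfold kernel_ext; destruct (Req_EM_T x 1); [lra|reflexivity]. }
  assert (H0e : plus (RInt kernel_ext 0 e) (RInt kernel_ext e 1) = kernel_integral)
    by (apply RInt_Chasles; apply ex_RInt_kernel_ext; lra).
  assert (HeT1 : plus (RInt kernel_ext e T) (RInt kernel_ext T 1) = RInt kernel_ext e 1)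
    by (apply RInt_Chasles; apply ex_RInt_kernel_ext; lra).
  assert (Hsmall : forall u v, 0 <= u -> u <= v -> v <= 1 -> Rabs (RInt kernel_ext u v) <= v - u).
  { intros u v Hu Huv Hv; rewrite <- (Rmult_1_r (v - u)).
    apply abs_RInt_le_const; [lra|apply ex_RInt_kernel_ext; lra|].
    intros t Ht; apply kernel_ext_bound; lra. }
  pose proof (Hsmall 0 e ltac:(lra) ltac:(lra) ltac:(lra)) as S1.
  pose proof (Hsmall T 1 ltac:(lra) ltac:(lra) ltac:(lra)) as S2.
  unfold plus in H0e, HeT1; simpl in H0e, HeT1.
  rewrite Hext, <- H0e, <- HeT1.
  apply Rabs_le_between in S1; apply Rabs_le_between in S2; apply Rabs_le_between; lra.
Qed.

Lemma ex_RInt_twin_r_clamped u v : ex_RInt (twin_r_clamped a) u v.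
Proof.
  apply (ex_RInt_continuous (V := R_CompleteNormedModule)); intros z _.
  apply continuity_pt_filterlim, continuous_twin_r_clamped, ha.
Qed.

Lemma ex_RInt_twin_l_clamped u v : ex_RInt (twin_l_clamped a) u v.
Proof.
  apply (ex_RInt_continuous (V := R_CompleteNormedModule)); intros z _.
  apply continuity_pt_filterlim, continuous_twin_l_clamped, ha.
Qed.

Lemma abs_RInt_twin_r_clamped u v : u <= v -> Rabs (RInt (twin_r_clamped a) u v) <= v - u.
Proof.
  intros Huv; rewrite <- (Rmult_1_r (v - u)).
  apply abs_RInt_le_const; [lra|apply ex_RInt_twin_r_clamped|intros t _].
  pose proof (x0_bounds a ha).
  destruct (twin_r_spec a ha (clamp 0 p t)) as [Hr _]; [apply clamp_in; lra|].
  unfold twin_r_clamped; rewrite Rabs_pos_eq; lra.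
Qed.

Lemma abs_RInt_twin_l_clamped u v : u <= v -> Rabs (RInt (twin_l_clamped a) u v) <= v - u.
Proof.
  intros Huv; rewrite <- (Rmult_1_r (v - u)).
  apply abs_RInt_le_const; [lra|apply ex_RInt_twin_l_clamped|intros t _].
  pose proof (x0_bounds a ha).
  destruct (twin_l_spec a ha (clamp p 1 t)) as [Hl _]; [apply clamp_in; lra|].
  unfold twin_l_clamped; rewrite Rabs_pos_eq; lra.
Qed.

Lemma is_RInt_kernel e T : 0 < e -> e <= T -> T < 1 -> is_RInt (kernel a) e T (RInt (kernel a) e T).
Proof.
  intros; apply (RInt_correct (V := R_CompleteNormedModule)), (ex_RInt_ext kernel_ext);
    [|apply ex_RInt_kernel_ext; lra].
  rewrite Rmin_left, Rmax_right by lra; intros x Hx.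
  unfold kernel_ext; destruct (Req_EM_T x 1); [lra|reflexivity].
Qed.

(* Substituting x = param_l t, so that f_a x = param_r t. *)
Lemma RInt_twin_r_param e T : 0 < e -> e <= T -> T < 1 ->
  RInt (twin_r_clamped a) (param_l a e) (param_l a T)
  = prim_l a T - prim_l a e - p * q / 2 * RInt (kernel a) e T.
Proof.
  intros He HeT HT.
  assert (Hsub : is_RInt (fun y => scal (param_l' a y) (twin_r_clamped a (param_l a y))) e T
                   (RInt (twin_r_clamped a) (param_l a e) (param_l a T))).
  { apply (is_RInt_comp (V := R_CompleteNormedModule));
      [intros x _; apply continuity_pt_filterlim, continuous_twin_r_clamped, ha|].
    rewrite Rmin_left, Rmax_right by lra; intros x Hx.
    split; [apply is_derive_param_l|apply continuous_param_l']; lra. }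
  assert (Hprim : is_RInt (fun t => param_r a t * param_l' a t + p * q / 2 * kernel a t) e T
                    (minus (prim_l a T) (prim_l a e))).
  { apply (is_RInt_derive (V := R_CompleteNormedModule));
      rewrite Rmin_left, Rmax_right by lra; intros x Hx;
      [apply is_derive_prim_l|apply continuous_prim_l']; lra. }
  assert (Hdiff := is_RInt_minus _ _ _ _ _ _ Hprim
                     (is_RInt_scal _ _ _ (p * q / 2) _ (is_RInt_kernel e T He HeT HT))).
  apply (is_RInt_unique (V := R_CompleteNormedModule)) in Hsub; rewrite <- Hsub.
  apply (is_RInt_unique (V := R_CompleteNormedModule)); refine (is_RInt_ext _ _ _ _ _ _ Hdiff).
  rewrite Rmin_left, Rmax_right by lra; intros x Hx.
  destruct (param_range a ha x) as [Hl _]; [lra|].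
  unfold twin_r_clamped; rewrite clamp_id, twin_r_param_l by lra.
  unfold minus, plus, opp, scal; simpl; unfold mult; simpl; ring.
Qed.

Lemma RInt_twin_l_param e T : 0 < e -> e <= T -> T < 1 ->
  RInt (twin_l_clamped a) (param_r a e) (param_r a T)
  = prim_r a T - prim_r a e + p * q / 2 * RInt (kernel a) e T.
Proof.
  intros He HeT HT.
  assert (Hsub : is_RInt (fun y => scal (param_r' a y) (twin_l_clamped a (param_r a y))) e T
                   (RInt (twin_l_clamped a) (param_r a e) (param_r a T))).
  { apply (is_RInt_comp (V := R_CompleteNormedModule));
      [intros x _; apply continuity_pt_filterlim, continuous_twin_l_clamped, ha|].
    rewrite Rmin_left, Rmax_right by lra; intros x Hx.
    split; [apply is_derive_param_r|apply continuous_param_r']; lra. }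
  assert (Hprim : is_RInt (fun t => param_l a t * param_r' a t - p * q / 2 * kernel a t) e T
                    (minus (prim_r a T) (prim_r a e))).
  { apply (is_RInt_derive (V := R_CompleteNormedModule));
      rewrite Rmin_left, Rmax_right by lra; intros x Hx;
      [apply is_derive_prim_r|apply continuous_prim_r']; lra. }
  assert (Hsum := is_RInt_plus _ _ _ _ _ _ Hprim
                    (is_RInt_scal _ _ _ (p * q / 2) _ (is_RInt_kernel e T He HeT HT))).
  apply (is_RInt_unique (V := R_CompleteNormedModule)) in Hsub; rewrite <- Hsub.
  apply (is_RInt_unique (V := R_CompleteNormedModule)); refine (is_RInt_ext _ _ _ _ _ _ Hsum).
  rewrite Rmin_left, Rmax_right by lra; intros x Hx.
  destruct (param_range a ha x) as [_ Hr]; [lra|].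
  unfold twin_l_clamped; rewrite clamp_id, twin_l_param_r by lra.
  unfold minus, plus, opp, scal; simpl; unfold mult; simpl; ring.
Qed.

End Integrals.

Section Values.

Variable a : R.
Hypothesis ha : 0 < a.

Local Notation p := (x0 a).
Local Notation q := (1 - x0 a).

Let scaled_kernel_approx e T : 0 < e -> e <= T -> T < 1 ->
  Rabs (p * q / 2 * (RInt (kernel a) e T - kernel_integral a)) <= e + (1 - T).
Proof.
  intros He HeT HT; pose proof (x0_bounds a ha).
  pose proof (RInt_kernel_approx a ha e T He HeT HT).
  rewrite Rabs_mult, (Rabs_pos_eq (p * q / 2)) by (apply Rmult_le_pos; nra).
  apply Rle_trans with (1 * (e + (1 - T))); [apply Rmult_le_compat; try nra; apply Rabs_pos|lra].
Qed.

(* Letting e -> 0 and T -> 1 in [RInt_twin_r_param]. *)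
Lemma RInt_twin_r_clamped_0_x0 :
  RInt (twin_r_clamped a) 0 p = prim_l_at_1 a + 1 / 2 - p * q / 2 * kernel_integral a.
Proof.
  apply eq_of_abs_le_eps with 7; intros eps Heps.
  assert (N0 : locally' 0 (fun e => Rabs (param_l a e - 0) < eps /\
                                    Rabs (prim_l a e - - (1 / 2)) < eps))
    by (apply filter_and; apply is_lim_near; try exact Heps;
        [apply param_l_lim_0 | apply prim_l_lim_0]; exact ha).
  assert (N1 : locally' 1 (fun T => Rabs (param_l a T - p) < eps /\
                                    Rabs (prim_l a T - prim_l_at_1 a) < eps))
    by (apply filter_and; apply is_lim_near; try exact Heps;
        [apply param_l_lim_1 | apply prim_l_lim_1]; exact ha).
  destruct (exists_near_0_and_1 _ _ eps Heps N0 N1) as [e [T [He [HeT [HT [[L1 L2] [L3 L4]]]]]]].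
  destruct (param_range a ha e) as [[Hle1 Hle2] _]; [lra|].
  destruct (param_range a ha T) as [[HlT1 HlT2] _]; [lra|].
  rewrite (RInt_Chasles3 _ 0 (param_l a e) (param_l a T) p (ex_RInt_twin_r_clamped a ha)).
  rewrite RInt_twin_r_param by (try assumption; lra).
  pose proof (abs_RInt_twin_r_clamped a ha 0 (param_l a e) ltac:(lra)) as S1.
  pose proof (abs_RInt_twin_r_clamped a ha (param_l a T) p ltac:(lra)) as S2.
  pose proof (scaled_kernel_approx e T ltac:(lra) ltac:(lra) ltac:(lra)) as S3.
  apply Rabs_le_between in S1; apply Rabs_le_between in S2; apply Rabs_le_between in S3.
  apply Rabs_lt_between in L1; apply Rabs_lt_between in L2.
  apply Rabs_lt_between in L3; apply Rabs_lt_between in L4.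
  apply Rabs_le; lra.
Qed.

Lemma RInt_twin_l_clamped_x0_1 :
  RInt (twin_l_clamped a) p 1 = 1 / 2 - prim_l_at_1 a - q - p * q / 2 * kernel_integral a.
Proof.
  apply eq_of_abs_le_eps with 7; intros eps Heps.
  assert (N0 : locally' 0 (fun e => Rabs (param_r a e - 1) < eps /\
                                    Rabs (prim_r a e - 1 / 2) < eps))
    by (apply filter_and; apply is_lim_near; try exact Heps;
        [apply param_r_lim_0 | apply prim_r_lim_0]; exact ha).
  assert (N1 : locally' 1 (fun T => Rabs (param_r a T - p) < eps /\
                                    Rabs (prim_r a T - (prim_l_at_1 a + q)) < eps))
    by (apply filter_and; apply is_lim_near; try exact Heps;
        [apply param_r_lim_1 | apply prim_r_lim_1]; exact ha).
  destruct (exists_near_0_and_1 _ _ eps Heps N0 N1) as [e [T [He [HeT [HT [[L1 L2] [L3 L4]]]]]]].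
  destruct (param_range a ha e) as [_ [Hre1 Hre2]]; [lra|].
  destruct (param_range a ha T) as [_ [HrT1 HrT2]]; [lra|].
  rewrite (RInt_Chasles3 _ p (param_r a T) (param_r a e) 1 (ex_RInt_twin_l_clamped a ha)).
  rewrite <- (opp_RInt_swap (V := R_CompleteNormedModule) _ (param_r a e) (param_r a T))
    by apply ex_RInt_twin_l_clamped, ha.
  rewrite RInt_twin_l_param by (try assumption; lra).
  pose proof (abs_RInt_twin_l_clamped a ha p (param_r a T) ltac:(lra)) as S1.
  pose proof (abs_RInt_twin_l_clamped a ha (param_r a e) 1 ltac:(lra)) as S2.
  pose proof (scaled_kernel_approx e T ltac:(lra) ltac:(lra) ltac:(lra)) as S3.
  apply Rabs_le_between in S1; apply Rabs_le_between in S2; apply Rabs_le_between in S3.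
  apply Rabs_lt_between in L1; apply Rabs_lt_between in L2.
  apply Rabs_lt_between in L3; apply Rabs_lt_between in L4.
  unfold opp; simpl; apply Rabs_le; lra.
Qed.

End Values.

(** * The kernel integral as a partial-fraction series *)

Fixpoint cot_partial (N : nat) (x : R) : R :=
  match N with
  | O => 0
  | S n => cot_partial n x + (1 / (INR n + 1 + x) - 1 / (INR n + 2 - x))
  end.

Section Kernel_series.

Variable a : R.
Hypothesis ha : 0 < a.

Local Notation p := (x0 a).
Local Notation q := (1 - x0 a).

Lemma ex_RInt_pow_mult_kernel_ext N : ex_RInt (fun t => t ^ N * kernel_ext a t) 0 1.
Proof.
  apply (ex_RInt_continuous (V := R_CompleteNormedModule)); intros z Hz.
  rewrite Rmin_left, Rmax_right in Hz by lra.
  apply continuity_pt_filterlim, (continuity_pt_mult (fun t => t ^ N) (kernel_ext a)).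
  - apply derivable_continuous_pt, derivable_pt_pow.
  - apply continuous_kernel_ext; lra.
Qed.

(* Expanding 1 / (1 - t) into a geometric series, one term at a time. *)
Lemma RInt_pow_mult_kernel_ext_S N :
  RInt (fun t => t ^ N * kernel_ext a t) 0 1
  = (1 / (INR N + 1 + p) - 1 / (INR N + 2 - p)) + RInt (fun t => t ^ S N * kernel_ext a t) 0 1.
Proof.
  pose proof (x0_bounds a ha); pose proof (pos_INR N).
  assert (Hp := is_RInt_rpow_01 (INR N + p) ltac:(lra)).
  assert (Hq := is_RInt_rpow_01 (INR N + q) ltac:(lra)).
  assert (HS := RInt_correct _ _ _ (ex_RInt_pow_mult_kernel_ext (S N))).
  assert (Hsum := is_RInt_plus _ _ _ _ _ _ (is_RInt_minus _ _ _ _ _ _ Hp Hq) HS).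
  apply (is_RInt_ext _ (fun t => t ^ N * kernel_ext a t)) in Hsum.
  - apply (is_RInt_unique (V := R_CompleteNormedModule)) in Hsum; rewrite Hsum.
    unfold plus, minus, opp; simpl; unfold plus; simpl; field; lra.
  - rewrite Rmin_left, Rmax_right by lra; intros t Ht.
    unfold kernel_ext, kernel; destruct (Req_EM_T t 1); [lra|].
    rewrite !rpow_plus, !rpow_INR by lra.
    unfold minus, plus, opp; simpl; unfold plus; simpl; field; lra.
Qed.

Lemma kernel_integral_partial N :
  kernel_integral a = cot_partial N p + RInt (fun t => t ^ N * kernel_ext a t) 0 1.
Proof.
  induction N as [|N IH].
  - unfold kernel_integral; simpl; rewrite Rplus_0_l.
    apply (RInt_ext (V := R_CompleteNormedModule)); intros x _; symmetry; apply Rmult_1_l.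
  - rewrite IH, RInt_pow_mult_kernel_ext_S; simpl; ring.
Qed.

Lemma kernel_integral_approx N : Rabs (kernel_integral a - cot_partial N p) <= 1 / (INR N + 1).
Proof.
  rewrite (kernel_integral_partial N), Rplus_minus_l.
  rewrite <- (is_RInt_unique (V := R_CompleteNormedModule) _ _ _ _ (is_RInt_pow_01 N)).
  assert (Hpow : ex_RInt (fun t => t ^ N) 0 1) by (eexists; apply is_RInt_pow_01).
  assert (Hbound : forall t, 0 <= t <= 1 -> - t ^ N <= t ^ N * kernel_ext a t <= t ^ N).
  { intros t Ht; pose proof (kernel_ext_bound a ha t Ht) as Hb.
    apply Rabs_le_between in Hb; assert (0 <= t ^ N) by (apply pow_le; lra); nra. }
  apply Rabs_le; split.
  - rewrite <- (RInt_opp (V := R_CompleteNormedModule)) by exact Hpow.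
    apply RInt_le; [lra|apply (ex_RInt_opp (V := R_CompleteNormedModule)), Hpow|
                   apply ex_RInt_pow_mult_kernel_ext|].
    intros t Ht; apply Hbound; lra.
  - apply RInt_le; [lra|apply ex_RInt_pow_mult_kernel_ext|exact Hpow|].
    intros t Ht; apply Hbound; lra.
Qed.

End Kernel_series.

Lemma cot_partial_term_bound x n : -1/2 <= x <= 3/2 ->
  Rabs (1 / (INR n + 1 + x) - 1 / (INR n + 2 - x)) <= 16 * (1 / (INR n + 1) - 1 / (INR n + 2)).
Proof.
  intros Hx; pose proof (pos_INR n) as Hm; set (m := INR n) in *.
  replace (1 / (m + 1 + x) - 1 / (m + 2 - x)) with ((1 - 2 * x) / ((m + 1 + x) * (m + 2 - x)))
    by (field; lra).
  replace (16 * (1 / (m + 1) - 1 / (m + 2))) with (16 / ((m + 1) * (m + 2))) by (field; lra).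
  rewrite Rabs_div, (Rabs_pos_eq ((m + 1 + x) * (m + 2 - x))) by nra.
  apply Rle_div_l; [nra|].
  apply Rle_trans with 2; [apply Rabs_le; lra|].
  assert ((m + 1 / 2) * (m + 1 / 2) <= (m + 1 + x) * (m + 2 - x)) by nra.
  replace (16 / ((m + 1) * (m + 2)) * ((m + 1 + x) * (m + 2 - x)))
    with (2 + (16 * ((m + 1 + x) * (m + 2 - x)) - 2 * ((m + 1) * (m + 2))) / ((m + 1) * (m + 2)))
    by (field; nra).
  assert (0 <= (16 * ((m + 1 + x) * (m + 2 - x)) - 2 * ((m + 1) * (m + 2))) / ((m + 1) * (m + 2)))
    by (apply Rdiv_le_0_compat; nra).
  lra.
Qed.

Lemma cot_partial_cauchy x N M : -1/2 <= x <= 3/2 -> (N <= M)%nat ->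
  Rabs (cot_partial M x - cot_partial N x) <= 16 / (INR N + 1).
Proof.
  intros Hx HNM.
  assert (Htail : forall k, Rabs (cot_partial (N + k) x - cot_partial N x)
                            <= 16 * (1 / (INR N + 1) - 1 / (INR (N + k) + 1))).
  { induction k as [|k IH].
    - rewrite Nat.add_0_r, !Rminus_diag, Rabs_R0; lra.
    - replace (N + S k)%nat with (S (N + k)) by lia; cbn [cot_partial].
      replace (_ + _ - _) with ((cot_partial (N + k) x - cot_partial N x)
                                + (1 / (INR (N + k) + 1 + x) - 1 / (INR (N + k) + 2 - x))) by ring.
      eapply Rle_trans; [apply Rabs_triang|].
      pose proof (cot_partial_term_bound x (N + k) Hx).
      rewrite S_INR; replace (INR (N + k) + 1 + 1) with (INR (N + k) + 2) by ring; lra. }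
  replace M with (N + (M - N))%nat by lia.
  eapply Rle_trans; [apply Htail|].
  pose proof (pos_INR (N + (M - N))); pose proof (pos_INR N).
  assert (0 < 1 / (INR (N + (M - N)) + 1)) by (apply Rdiv_lt_0_compat; lra).
  unfold Rdiv in *; lra.
Qed.

(* The partial-fraction series of pi cot(pi x) + 1 / (1 - x) - 1 / x. *)
Definition cot_series x := real (Lim_seq (fun N => cot_partial N x)).

Lemma cot_series_approx x N : -1/2 <= x <= 3/2 ->
  Rabs (cot_series x - cot_partial N x) <= 16 / (INR N + 1).
Proof.
  intros Hx; apply (Lim_seq_approx (fun N => cot_partial N x)); intros.
  apply cot_partial_cauchy; assumption.
Qed.

Lemma kernel_integral_cot_series a : 0 < a -> kernel_integral a = cot_series (x0 a).
Proof.
  intros ha; pose proof (x0_bounds a ha).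
  apply eq_of_abs_le_div_INR with 17; intros N.
  pose proof (kernel_integral_approx a ha N) as A1.
  pose proof (cot_series_approx (x0 a) N ltac:(lra)) as A2.
  replace (17 / (INR N + 1)) with (1 / (INR N + 1) + 16 / (INR N + 1))
    by (pose proof (pos_INR N); field; lra).
  apply Rabs_le_between in A1; apply Rabs_le_between in A2; apply Rabs_le_between; lra.
Qed.

Lemma continuous_cot_partial N c : 0 <= c <= 1 -> continuity_pt (cot_partial N) c.
Proof.
  intros Hc; induction N as [|N IH]; simpl.
  - apply continuity_pt_const; intros u v; reflexivity.
  - pose proof (pos_INR N).
    apply (continuity_pt_plus (cot_partial N) (fun x => 1 / (INR N + 1 + x) - 1 / (INR N + 2 - x)));
      [exact IH|].
    apply continuity_pt_filterlim,
      (ex_derive_continuous (fun x => 1 / (INR N + 1 + x) - 1 / (INR N + 2 - x))).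
    auto_derive; lra.
Qed.

Lemma continuous_cot_series c : 0 <= c <= 1 -> continuity_pt cot_series c.
Proof.
  intros Hc; apply (continuity_pt_of_uniform_approx _ cot_partial 16 c (1 / 2)); [lra| |].
  - intros N y Hy; apply Rabs_lt_between' in Hy; apply cot_series_approx; lra.
  - intros N; apply continuous_cot_partial, Hc.
Qed.

Lemma cot_series_0 : cot_series 0 = 1.
Proof.
  assert (Hpartial : forall N, cot_partial N 0 = 1 - 1 / (INR N + 1)).
  { induction N as [|N IH]; [simpl; field|].
    cbn [cot_partial]; rewrite IH, S_INR; pose proof (pos_INR N); field; lra. }
  apply eq_of_abs_le_div_INR with 17; intros N.
  pose proof (cot_series_approx 0 N ltac:(lra)) as A; rewrite Hpartial in A.
  pose proof (pos_INR N); assert (0 < 1 / (INR N + 1)) by (apply Rdiv_lt_0_compat; lra).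
  replace (17 / (INR N + 1)) with (16 / (INR N + 1) + 1 / (INR N + 1)) by (field; lra).
  apply Rabs_le_between in A; apply Rabs_le; lra.
Qed.

Lemma cot_series_1 : cot_series 1 = -1.
Proof.
  assert (Hpartial : forall N, cot_partial N 1 = - (1 - 1 / (INR N + 1))).
  { induction N as [|N IH]; [simpl; field|].
    cbn [cot_partial]; rewrite IH, S_INR; pose proof (pos_INR N); field; lra. }
  apply eq_of_abs_le_div_INR with 17; intros N.
  pose proof (cot_series_approx 1 N ltac:(lra)) as A; rewrite Hpartial in A.
  pose proof (pos_INR N); assert (0 < 1 / (INR N + 1)) by (apply Rdiv_lt_0_compat; lra).
  replace (17 / (INR N + 1)) with (16 / (INR N + 1) + 1 / (INR N + 1)) by (field; lra).
  apply Rabs_le_between in A; apply Rabs_le; lra.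
Qed.

Lemma cot_partial_duplication x N : 0 < x < 1 ->
  cot_partial N (x / 2) + cot_partial N ((x + 1) / 2)
  = 2 * cot_partial (2 * N) x - 2 / (1 + x) + 2 / (2 - x)
    + 2 / (2 * INR N + 1 + x) - 2 / (2 * INR N + 2 - x).
Proof.
  intros Hx; induction N as [|N IH]; [simpl; field; lra|].
  replace (2 * S N)%nat with (S (S (2 * N))) by lia; cbn [cot_partial].
  rewrite !S_INR, mult_INR; simpl (INR 2); pose proof (pos_INR N).
  transitivity ((cot_partial N (x / 2) + cot_partial N ((x + 1) / 2))
                + (1 / (INR N + 1 + x / 2) - 1 / (INR N + 2 - x / 2))
                + (1 / (INR N + 1 + (x + 1) / 2) - 1 / (INR N + 2 - (x + 1) / 2))); [ring|].
  rewrite IH; field; repeat split; lra.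
Qed.

Lemma cot_series_duplication x : 0 < x < 1 ->
  cot_series (x / 2) + cot_series ((x + 1) / 2) = 2 * cot_series x + 2 / (2 - x) - 2 / (1 + x).
Proof.
  intros Hx; apply eq_of_abs_le_div_INR with 100; intros N; pose proof (pos_INR N).
  pose proof (cot_series_approx (x / 2) N ltac:(lra)) as A1.
  pose proof (cot_series_approx ((x + 1) / 2) N ltac:(lra)) as A2.
  pose proof (cot_series_approx x (2 * N) ltac:(lra)) as A3.
  pose proof (cot_partial_duplication x N Hx).
  rewrite mult_INR in A3; replace (INR 2) with 2 in A3 by (simpl; lra).
  assert (B3 : 16 / (2 * INR N + 1) <= 16 / (INR N + 1)).
  { apply Rmult_le_compat_l; [lra|]; apply Rinv_le_contravar; lra. }
  assert (B4 : 0 < 2 / (2 * INR N + 1 + x) <= 2 / (INR N + 1)).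
  { split; [apply Rdiv_lt_0_compat; lra|].
    apply Rmult_le_compat_l; [lra|]; apply Rinv_le_contravar; lra. }
  assert (B5 : 0 < 2 / (2 * INR N + 2 - x) <= 2 / (INR N + 1)).
  { split; [apply Rdiv_lt_0_compat; lra|].
    apply Rmult_le_compat_l; [lra|]; apply Rinv_le_contravar; lra. }
  replace (100 / (INR N + 1)) with (6 * (16 / (INR N + 1)) + 2 * (2 / (INR N + 1))) by (field; lra).
  apply Rabs_le_between in A1; apply Rabs_le_between in A2; apply Rabs_le_between in A3.
  apply Rabs_le; lra.
Qed.

(** * Summing the series *)

Lemma sin_neq_0_small z : 0 < Rabs z <= 1 -> sin z <> 0.
Proof.
  intros Hz; pose proof PI2_3_2; destruct (Rle_lt_dec 0 z).
  - rewrite Rabs_pos_eq in Hz by lra; assert (0 < sin z) by (apply sin_gt_0; lra); lra.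
  - rewrite Rabs_left in Hz by lra; assert (0 < sin (- z)) by (apply sin_gt_0; lra).
    rewrite sin_neg in *; lra.
Qed.

Lemma cot_minus_inv_bound_pos z : 0 < z <= 1 -> Rabs (cos z / sin z - 1 / z) <= z.
Proof.
  intros Hz; pose proof PI2_3_2.
  destruct (sin_bound z 0) as [S1 S2]; try lra.
  destruct (cos_bound z 0) as [C1 C2]; try lra.
  unfold sin_approx, sin_term, cos_approx, cos_term in *; simpl in *.
  assert (Hs : 5 * z / 6 <= sin z) by nra.
  replace (cos z / sin z - 1 / z) with ((z * cos z - sin z) / (z * sin z)) by (field; lra).
  assert (N1 : - (z ^ 3 / 2) <= z * cos z - sin z) by nra.
  assert (N2 : z * cos z - sin z <= 0) by nra.
  rewrite Rabs_div, Rabs_left1, Rabs_pos_eq by nra.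
  apply Rle_div_l; nra.
Qed.

Lemma cot_minus_inv_bound z : 0 < Rabs z <= 1 -> Rabs (cos z / sin z - 1 / z) <= Rabs z.
Proof.
  intros Hz; destruct (Rle_lt_dec 0 z).
  - rewrite (Rabs_pos_eq z) in * by lra; apply cot_minus_inv_bound_pos; lra.
  - rewrite (Rabs_left z) in * by lra.
    assert (sin z <> 0) by (apply sin_neq_0_small; rewrite Rabs_left; lra).
    replace (cos z / sin z - 1 / z) with (- (cos (- z) / sin (- z) - 1 / (- z)))
      by (rewrite cos_neg, sin_neg; field; lra).
    rewrite Rabs_Ropp; apply cot_minus_inv_bound_pos; lra.
Qed.

Definition cot_closed x :=
  if Req_EM_T x 0 then 1 else if Req_EM_T x 1 then -1 else PI * cot (PI * x) + 1 / (1 - x) - 1 / x.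

Lemma continuous_cot_closed_0 : continuity_pt cot_closed 0.
Proof.
  intros eps Heps; simpl; unfold R_dist; pose proof PI_4; pose proof PI_RGT_0.
  exists (Rmin (eps / 20) (1 / 4)); split; [apply Rmin_pos; lra|]; intros x [_ Hx].
  rewrite Rminus_0_r in Hx.
  pose proof (Rmin_l (eps / 20) (1 / 4)); pose proof (Rmin_r (eps / 20) (1 / 4)).
  unfold cot_closed at 2; destruct (Req_EM_T 0 0); [|lra].
  unfold cot_closed; destruct (Req_EM_T x 0) as [->|Hx0]; [rewrite Rminus_diag, Rabs_R0; lra|].
  assert (Hx4 : - (1 / 4) < x < 1 / 4) by (apply Rabs_lt_between; lra).
  destruct (Req_EM_T x 1); [lra|].
  assert (Hax : 0 < Rabs x) by (apply Rabs_pos_lt, Hx0).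
  assert (Hz : 0 < Rabs (PI * x) <= 1) by (rewrite Rabs_mult, (Rabs_pos_eq PI) by lra; split; nra).
  pose proof (sin_neq_0_small _ Hz).
  pose proof (cot_minus_inv_bound _ Hz) as B; unfold cot.
  replace (PI * (cos (PI * x) / sin (PI * x)) + 1 / (1 - x) - 1 / x - 1)
    with (PI * (cos (PI * x) / sin (PI * x) - 1 / (PI * x)) + x / (1 - x))
    by (field; repeat split; lra).
  eapply Rle_lt_trans; [apply Rabs_triang|].
  rewrite Rabs_mult, (Rabs_pos_eq PI) by lra; rewrite Rabs_mult, (Rabs_pos_eq PI) in B by lra.
  assert (Hq : Rabs (x / (1 - x)) <= 2 * Rabs x).
  { rewrite Rabs_div, (Rabs_pos_eq (1 - x)) by lra.
    apply Rle_div_l; [lra|]; pose proof (Rabs_pos x); nra. }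
  assert (PI * Rabs (cos (PI * x) / sin (PI * x) - 1 / (PI * x)) <= 16 * Rabs x)
    by (apply Rle_trans with (PI * (PI * Rabs x)); [apply Rmult_le_compat_l; lra|];
        assert (PI * PI <= 16) by nra; pose proof (Rabs_pos x); nra).
  lra.
Qed.

Lemma cot_closed_1_minus x : cot_closed (1 - x) = - cot_closed x.
Proof.
  unfold cot_closed; destruct (Req_EM_T x 0) as [->|H0].
  - destruct (Req_EM_T (1 - 0) 0); [lra|]; destruct (Req_EM_T (1 - 0) 1); lra.
  - destruct (Req_EM_T x 1) as [->|H1].
    + destruct (Req_EM_T (1 - 1) 0); lra.
    + destruct (Req_EM_T (1 - x) 0); [lra|]; destruct (Req_EM_T (1 - x) 1); [lra|].
      unfold cot; replace (PI * (1 - x)) with (PI - PI * x) by ring.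
      rewrite sin_PI_x, cos_minus, cos_PI, sin_PI; replace (1 - (1 - x)) with x by ring.
      unfold Rdiv; ring.
Qed.

Lemma continuous_cot_closed c : 0 <= c <= 1 -> continuity_pt cot_closed c.
Proof.
  intros Hc; destruct (Req_EM_T c 0) as [->|H0]; [exact continuous_cot_closed_0|].
  destruct (Req_EM_T c 1) as [->|H1].
  - apply continuity_pt_ext_loc with (f := fun x => - cot_closed (1 - x)).
    + apply filter_forall; intros y; rewrite cot_closed_1_minus; ring.
    + apply (continuity_pt_comp (fun x => 1 - x) (fun y => - cot_closed y)).
      * apply continuity_pt_minus; [|apply continuity_pt_id].
        apply continuity_pt_const; intros u v; reflexivity.
      * replace (1 - 1) with 0 by ring; apply continuity_pt_opp, continuous_cot_closed_0.
  - pose proof PI_RGT_0; assert (Hd : 0 < Rmin c (1 - c)) by (apply Rmin_pos; lra).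
    apply continuity_pt_ext_loc
      with (f := fun x => PI * (cos (PI * x) / sin (PI * x)) + 1 / (1 - x) - 1 / x).
    + exists (mkposreal _ Hd); intros y Hy; apply Rabs_lt_between' in Hy; simpl in Hy.
      pose proof (Rmin_l c (1 - c)); pose proof (Rmin_r c (1 - c)).
      unfold cot_closed; destruct (Req_EM_T y 0); [lra|].
      destruct (Req_EM_T y 1); [lra|reflexivity].
    + apply continuity_pt_filterlim.
      apply (ex_derive_continuous
               (fun x => PI * (cos (PI * x) / sin (PI * x)) + 1 / (1 - x) - 1 / x)).
      assert (0 < sin (PI * c)) by (apply sin_gt_0; nra).
      auto_derive; repeat split; lra.
Qed.

Lemma cot_closed_duplication x : 0 < x < 1 ->
  cot_closed (x / 2) + cot_closed ((x + 1) / 2) = 2 * cot_closed x + 2 / (2 - x) - 2 / (1 + x).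
Proof.
  intros Hx; pose proof PI_RGT_0; unfold cot_closed.
  destruct (Req_EM_T (x / 2) 0); [lra|]; destruct (Req_EM_T (x / 2) 1); [lra|].
  destruct (Req_EM_T ((x + 1) / 2) 0); [lra|]; destruct (Req_EM_T ((x + 1) / 2) 1); [lra|].
  destruct (Req_EM_T x 0); [lra|]; destruct (Req_EM_T x 1); [lra|].
  unfold cot; set (z := PI * x / 2).
  replace (PI * (x / 2)) with z by (unfold z; field).
  replace (PI * ((x + 1) / 2)) with (z + PI / 2) by (unfold z; field).
  replace (PI * x) with (2 * z) by (unfold z; field).
  rewrite cos_plus, sin_plus, cos_PI2, sin_PI2, sin_2a, cos_2a.
  assert (0 < sin z) by (apply sin_gt_0; unfold z; nra).
  assert (0 < cos z) by (apply cos_gt_0; unfold z; nra).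
  field; repeat split; lra.
Qed.

Lemma cot_series_closed x : 0 <= x <= 1 -> cot_series x = cot_closed x.
Proof.
  intros Hx; cut (cot_series x - cot_closed x = 0); [lra|].
  refine (herglotz_zero (fun y => cot_series y - cot_closed y) _ _ _ _ x Hx).
  - intros c Hc; apply continuity_pt_minus;
      [apply continuous_cot_series|apply continuous_cot_closed]; exact Hc.
  - rewrite cot_series_0; unfold cot_closed; destruct (Req_EM_T 0 0); lra.
  - rewrite cot_series_1; unfold cot_closed; destruct (Req_EM_T 1 0); [lra|].
    destruct (Req_EM_T 1 1); lra.
  - intros y Hy; pose proof (cot_series_duplication y Hy).
    pose proof (cot_closed_duplication y Hy); lra.
Qed.

Lemma kernel_integral_value a : 0 < a ->
  kernel_integral a = PI * cot (PI * x0 a) + 1 / (1 - x0 a) - 1 / x0 a.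
Proof.
  intros ha; pose proof (x0_bounds a ha).
  rewrite kernel_integral_cot_series, cot_series_closed by (try assumption; lra).
  unfold cot_closed; destruct (Req_EM_T (x0 a) 0); [lra|]; destruct (Req_EM_T (x0 a) 1); [lra|].
  reflexivity.
Qed.

Lemma is_RInt_f_a_0_x0 a : 0 < a -> is_RInt (f_a a) 0 (x0 a) (RInt (twin_r_clamped a) 0 (x0 a)).
Proof.
  intros ha; pose proof (x0_bounds a ha).
  apply (is_RInt_ext (twin_r_clamped a)).
  - rewrite Rmin_left, Rmax_right by lra; intros x Hx.
    unfold twin_r_clamped, twin_r, f_a; rewrite clamp_id by lra.
    destruct (Rle_dec x (x0 a)); [reflexivity|lra].
  - apply (RInt_correct (V := R_CompleteNormedModule)), ex_RInt_twin_r_clamped, ha.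
Qed.

Lemma is_RInt_f_a_x0_1 a : 0 < a -> is_RInt (f_a a) (x0 a) 1 (RInt (twin_l_clamped a) (x0 a) 1).
Proof.
  intros ha; pose proof (x0_bounds a ha).
  apply (is_RInt_ext (twin_l_clamped a)).
  - rewrite Rmin_left, Rmax_right by lra; intros x Hx.
    unfold twin_l_clamped, twin_l, f_a; rewrite clamp_id by lra.
    destruct (Rle_dec x (x0 a)); [lra|reflexivity].
  - apply (RInt_correct (V := R_CompleteNormedModule)), ex_RInt_twin_l_clamped, ha.
Qed.

Theorem proposition7 (a : R) (ha : 0 < a) :
  is_RInt (f_a a) 0 1
    (1 / (1 + a) * (1 - a * PI / (a + 1) * cot (a * PI / (a + 1)))) /\
  is_RInt (f_a a) 0 (a / (a + 1))
    (1 / (2 * (1 + a) ^ 2) * (1 + a + a ^ 2 - a * PI * cot (a * PI / (a + 1)))).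
Proof.
  assert (Hcot : PI * x0 a = a * PI / (a + 1)) by (unfold x0; field; lra).
  pose proof (is_RInt_f_a_0_x0 a ha) as Hl; pose proof (is_RInt_f_a_x0_1 a ha) as Hr.
  rewrite RInt_twin_r_clamped_0_x0, kernel_integral_value, Hcot in Hl by exact ha.
  rewrite RInt_twin_l_clamped_x0_1, kernel_integral_value, Hcot in Hr by exact ha.
  split.
  - refine (eq_ind _ (fun v : R => is_RInt (f_a a) 0 1 v) (is_RInt_Chasles _ _ _ _ _ _ Hl Hr) _ _).
    unfold plus, prim_l_at_1, x0; simpl; field; lra.
  - refine (eq_ind _ (fun v : R => is_RInt (f_a a) 0 (x0 a) v) Hl _ _).
    unfold prim_l_at_1, x0; field; lra.
Qed.
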